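(* The monoid $\mathrm{lps}$ and the monoids $\mathrm{lps}_n$ for $n\geq2$ do not satisfy any non-trivial identity.
   Context: Let $\mathcal{A}=\{1<2<3<\cdots\}$ and $\mathcal{A}_n=\{1<2<\cdots<n\}$. An lPS tableau is a finite (possibly empty) sequence of nonempty bottom-justified columns of boxes filled with positive integers, such that the entries of each column are strictly decreasing from top to bottom and the bottom entries of the columns form a weakly increasing sequence from left to right. Right insertion of a symbol $a$ into an lPS tableau $B$: if $a$ is greater than or equal to every entry of the bottom row, append a new column consisting of $a$ at the right end; otherwise, let $z$ be the leftmost bottom-row entry with $z>a$ and put $a$ in a new box at the bottom of the column of $z$ (the previous entries of that column move up one box). For $w=w_1\cdots w_k$, $\mathfrak{R}_\ell(w)$ is obtained by starting with the empty tableau and right-inserting $w_1,\dots,w_k$ in order. The monoid $\mathrm{lps}$ (resp. $\mathrm{lps}_n$) is the quotient of $\mathcal{A}^*$ (resp. $\mathcal{A}_n^*$) by the congruence $u\equiv v\iff\mathfrak{R}_\ell(u)=\mathfrak{R}_\ell(v)$. An identity is a formal equality $u=v$ of words over a countable alphabet $\Sigma$ of variables; it is non-trivial if $u\neq v$ as words; a monoid $M$ satisfies it if $f(u)=f(v)$ for every monoid morphism $f:\Sigma^*\to M$. *)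

From mathcomp Require Import all_boot.
Set Implicit Arguments. Unset Strict Implicit. Unset Printing Implicit Defensive.

(* An lPS tableau is a sequence of columns (left to right); each column is
   stored BOTTOM-FIRST, i.e. as the list of its entries read from the bottom
   box upwards.  Letters of the alphabet A = {1<2<3<...} are positive nats. *)
Definition column := seq nat.
Definition tableau := seq column.

Fixpoint rinsert (a : nat) (B : tableau) : tableau :=
  match B with
  | [::] => [:: [:: a]]
  | c :: B' => if a < head 0 c then (a :: c) :: B' else c :: rinsert a B'
  end.

Definition Rl (w : seq nat) : tableau := foldl (fun B a => rinsert a B) [::] w.

Definition wordA (w : seq nat) : bool := all (fun a => 0 < a) w.
Definition wordAn (n : nat) (w : seq nat) : bool := all (fun a => 0 < a <= n) w.

(* Variables of Sigma are indexed by nat; identities are pairs of words over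
   Sigma.  A monoid morphism Sigma^* -> A^*/== is determined by the images of
   the variables, each being the class of some word; so f(u) is the class of
   the word obtained by substituting. *)
Definition subst (s : nat -> seq nat) (u : seq nat) : seq nat :=
  flatten (map s u).

Definition lps_satisfies (u v : seq nat) : Prop :=
  forall s : nat -> seq nat, (forall x, wordA (s x)) ->
    Rl (subst s u) = Rl (subst s v).

Definition lpsn_satisfies (n : nat) (u v : seq nat) : Prop :=
  forall s : nat -> seq nat, (forall x, wordAn n (s x)) ->
    Rl (subst s u) = Rl (subst s v).

From mathcomp Require Import all_boot.

(* Substitute the word 1 (2 1)^z for the variable z.  Every such word,
   inserted into a tableau whose bottom row consists of 1s, only appends
   columns: first the column 1, then z columns with bottom 1 and top 2.
   Hence the tableau of the image of a word u over the variables is the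
   sequence of blocks [1] [2/1]^z, z running through u, and u can be read
   back from it. *)

Definition insert_word (T : tableau) (w : seq nat) : tableau :=
  foldl (fun B a => rinsert a B) T w.

Definition bottoms_le (a : nat) (T : tableau) : bool :=
  all (fun c => head 0 c <= a) T.

Lemma rinsert_append a T : bottoms_le a T -> rinsert a T = rcons T [:: a].
Proof. by elim: T => //= c T IH /andP[ca Ta]; rewrite ltnNge ca IH. Qed.

Lemma rinsert_rcons a T c :
  bottoms_le a T -> a < head 0 c -> rinsert a (rcons T c) = rcons T (a :: c).
Proof.
move=> + ac; elim: T => [|c' T IH] /=; first by rewrite ac.
by case/andP=> c'a Ta; rewrite ltnNge c'a IH.
Qed.

Lemma bottoms_le_cat a T U :
  bottoms_le a (T ++ U) = bottoms_le a T && bottoms_le a U.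
Proof. exact: all_cat. Qed.

Lemma bottoms_le_mono a b T : a <= b -> bottoms_le a T -> bottoms_le b T.
Proof. by move=> ab; apply: sub_all => c /leq_trans; apply. Qed.

Definition code_word (z : nat) : seq nat := 1 :: flatten (nseq z [:: 2; 1]).

Definition code_tableau (z : nat) : tableau := [:: 1] :: nseq z [:: 1; 2].

Lemma bottoms_le1_code_tableau z : bottoms_le 1 (code_tableau z).
Proof. by elim: z. Qed.

Lemma insert_code_word z T :
  bottoms_le 1 T -> insert_word T (code_word z) = T ++ code_tableau z.
Proof.
move=> T1; rewrite /insert_word /= rinsert_append // -cat_rcons.
have : bottoms_le 1 (rcons T [:: 1]) by rewrite -cats1 bottoms_le_cat T1.
move: (rcons T _) => U; elim: z U => [|z IH] U U1 /=; first by rewrite cats0.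
have U2 : bottoms_le 2 U by exact: bottoms_le_mono U1.
rewrite (rinsert_append 2 U) // rinsert_rcons // IH.
  by rewrite cat_rcons.
by rewrite -cats1 bottoms_le_cat U1.
Qed.

Lemma insert_word_cat T w1 w2 :
  insert_word T (w1 ++ w2) = insert_word (insert_word T w1) w2.
Proof. exact: foldl_cat. Qed.

Lemma insert_subst_code_word T u : bottoms_le 1 T ->
  insert_word T (subst code_word u) = T ++ flatten (map code_tableau u).
Proof.
elim: u T => [|z u IH] T T1; first by rewrite cats0.
rewrite [subst _ _]/= insert_word_cat insert_code_word // IH ?catA //.
by rewrite bottoms_le_cat T1 bottoms_le1_code_tableau.
Qed.

Lemma Rl_subst_code_word u : Rl (subst code_word u) = flatten (map code_tableau u).
Proof. exact: insert_subst_code_word. Qed.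

Lemma head_flatten_code_tableau u :
  head [::] (flatten (map code_tableau u)) != [:: 1; 2].
Proof. by case: u. Qed.

Lemma nseq_cat_code_tableau_inj a b u v :
  nseq a [:: 1; 2] ++ flatten (map code_tableau u) =
  nseq b [:: 1; 2] ++ flatten (map code_tableau v) ->
  a = b /\ flatten (map code_tableau u) = flatten (map code_tableau v).
Proof.
elim: a b => [|a IH] [|b] //= => [eq_uv | eq_uv | [/IH[-> ->]]] //.
- by have := head_flatten_code_tableau u; rewrite eq_uv eqxx.
- by have := head_flatten_code_tableau v; rewrite -eq_uv eqxx.
Qed.

Lemma flatten_code_tableau_inj :
  injective (fun u => flatten (map code_tableau u)).
Proof.
elim=> [|z u IH] [|z' v] //= [] /nseq_cat_code_tableau_inj[-> /IH ->] //.
Qed.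

Lemma Rl_subst_code_word_inj u v :
  Rl (subst code_word u) = Rl (subst code_word v) -> u = v.
Proof. by rewrite !Rl_subst_code_word => /flatten_code_tableau_inj. Qed.

Lemma wordAn_code_word z {n} : 2 <= n -> wordAn n (code_word z).
Proof.
move=> n2; rewrite /wordAn /= (leq_trans _ n2) //=.
by elim: z => //= z ->; rewrite n2 (leq_trans _ n2).
Qed.

Lemma wordAn_wordA n w : wordAn n w -> wordA w.
Proof. by apply: sub_all => a /andP[]. Qed.

Theorem corollary4p4 :
  (forall u v : seq nat, u <> v -> ~ lps_satisfies u v) /\
  (forall n : nat, 2 <= n -> forall u v : seq nat, u <> v -> ~ lpsn_satisfies n u v).
Proof.
split=> [u v | n n2 u v] uv sat; apply/uv/Rl_subst_code_word_inj/sat => x.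
- exact: wordAn_wordA (wordAn_code_word x (leqnn 2)).
- exact: wordAn_code_word.
Qed.
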